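(* Let $\theta\in[0,\pi/2]$, $\nu_1,\nu_2\in[0,1]$ with $\nu_1+\nu_2=1$, and $\rho_s=\nu_1|\psi_1\rangle\langle\psi_1|+\nu_2|\psi_2\rangle\langle\psi_2|$ with $|\psi_1\rangle=\cos\theta|00\rangle+\sin\theta|11\rangle$, $|\psi_2\rangle=\sin\theta|00\rangle-\cos\theta|11\rangle$, and let $\mathcal C=|(\nu_1-\nu_2)\sin2\theta|$ (its concurrence). Then there exist unit vectors $\hat a_1,\hat a_2,\hat a_3\in\mathbb R^3$ and an orthonormal triple $\hat b_1,\hat b_2,\hat b_3\in\mathbb R^3$ such that $\frac13\sum_{k=1}^3\mathrm{Tr}\big[\rho_s\,(\hat a_k\cdot\vec\sigma)\otimes(\hat b_k\cdot\vec\sigma)\big]=\frac{2+\sqrt{1+2\mathcal C^2}}{3\sqrt3},$ which is strictly larger than $\frac1{\sqrt3}$ whenever $\mathcal C>0$.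
   Context: $\vec\sigma=(\sigma_x,\sigma_y,\sigma_z)$ is the vector of Pauli matrices; the first tensor factor is Alice's qubit, the second Bob's; $\{|0\rangle,|1\rangle\}$ is the computational basis. The number $1/\sqrt3$ is the local-hidden-state bound of the 3-setting linear steering inequality. *)

From HB Require Import structures.
From mathcomp Require Import all_boot all_order all_algebra.
From mathcomp Require Import all_classical all_reals all_analysis.
From mathcomp Require Import complex mxtens.
Set Implicit Arguments. Unset Strict Implicit. Unset Printing Implicit Defensive.
Import Order.TTheory GRing.Theory Num.Theory.
Local Open Scope ring_scope.

Section Pauli.
Variable R : rcfType.
Local Notation C := R[i].

Definition sigma_x : 'M[C]_2 :=
  \matrix_(i < 2, j < 2) (if (i : nat) != j then 1 else 0).
Definition sigma_y : 'M[C]_2 :=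
  \matrix_(i < 2, j < 2)
    (if ((i : nat) == 0%N) && ((j : nat) == 1%N) then - Complex 0 1
     else if ((i : nat) == 1%N) && ((j : nat) == 0%N) then Complex 0 1
     else 0).
Definition sigma_z : 'M[C]_2 :=
  \matrix_(i < 2, j < 2)
    (if (i : nat) == j then (if (i : nat) == 0%N then 1 else -1) else 0).

Definition pauli (k : 'I_3) : 'M[C]_2 :=
  if (k : nat) == 0%N then sigma_x
  else if (k : nat) == 1%N then sigma_y else sigma_z.

Definition dot_sigma (a : 'cV[R]_3) : 'M[C]_2 :=
  \sum_(k < 3) (real_complex R (a k 0)) *: pauli k.

Definition ket0 : 'cV[C]_2 := \col_(i < 2) (if (i : nat) == 0%N then 1 else 0).
Definition ket1 : 'cV[C]_2 := \col_(i < 2) (if (i : nat) == 1%N then 1 else 0).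

(* two-qubit kets; first tensor factor = Alice *)
Definition ket00 : 'cV[C]_(2 * 2) := tensmx ket0 ket0.
Definition ket11 : 'cV[C]_(2 * 2) := tensmx ket1 ket1.

Definition proj {n : nat} (psi : 'cV[C]_n) : 'M[C]_n :=
  psi *m (map_mx (fun z => z^*) psi)^T.

Definition dot3 (u v : 'cV[R]_3) : R := \sum_(k < 3) u k 0 * v k 0.

End Pauli.

Definition psi1 {R : realType} (theta : R) : 'cV[R[i]]_(2 * 2) :=
  real_complex R (cos theta) *: ket00 R + real_complex R (sin theta) *: ket11 R.
Definition psi2 {R : realType} (theta : R) : 'cV[R[i]]_(2 * 2) :=
  real_complex R (sin theta) *: ket00 R - real_complex R (cos theta) *: ket11 R.
Definition rho_s {R : realType} (nu1 nu2 theta : R) : 'M[R[i]]_(2 * 2) :=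
  real_complex R nu1 *: proj (psi1 theta) + real_complex R nu2 *: proj (psi2 theta).

Definition concurrence {R : realType} (nu1 nu2 theta : R) : R :=
  `|(nu1 - nu2) * sin (2 * theta)|.

Definition steering_value {R : realType} (rho : 'M[R[i]]_(2 * 2))
  (a b : 'I_3 -> 'cV[R]_3) : R[i] :=
  (3%:R)^-1 * \sum_(k < 3) \tr (rho *m tensmx (dot_sigma (a k)) (dot_sigma (b k))).

From Pilot Require Import Defs.
From HB Require Import structures.
From mathcomp Require Import all_boot all_order all_algebra.
From mathcomp Require Import all_classical all_reals all_analysis.
From mathcomp Require Import complex mxtens.
From mathcomp Require Import ring lra.
Import Order.TTheory GRing.Theory Num.Theory.
Set Implicit Arguments. Unset Strict Implicit. Unset Printing Implicit Defensive.
Local Open Scope ring_scope.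

(* Both pure states are real superpositions c|00> + s|11>, for which
   Tr[|psi><psi| (a.sigma) (x) (b.sigma)] = (c^2 + s^2) a_z b_z + 2cs (a_x b_x - a_y b_y).
   Hence the correlation of rho_s is a^T T b with T = diag(D, -D, 1) and
   D = (nu1 - nu2) sin 2theta, so that C = |D|.  Bob measures along three orthonormal
   directions b_k making equal angles with the z axis (each has z component 1/sqrt 3);
   Alice measures along T b_1 / |T b_1| first and along z twice.  The three correlations
   are then |T b_1| = sqrt((1 + 2 D^2) / 3) and 1/sqrt 3 twice. *)

Section Correlation.
Variable R : rcfType.

Definition vec3 (x y z : R) : 'cV[R]_3 := \col_(k < 3) [:: x; y; z]`_k.

Lemma vec3E0 x y z : vec3 x y z 0 0 = x. Proof. by rewrite mxE. Qed.
Lemma vec3E1 x y z : vec3 x y z 1 0 = y. Proof. by rewrite mxE. Qed.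
Lemma vec3E2 x y z : vec3 x y z 2%:R 0 = z. Proof. by rewrite mxE. Qed.

Lemma dot3_vec3 x y z x' y' z' :
  dot3 (vec3 x y z) (vec3 x' y' z') = x * x' + y * y' + z * z'.
Proof. by rewrite /dot3 !big_ord_recr big_ord0 /= !mxE /= add0r. Qed.

Definition correlation (D : R) (a b : 'cV[R]_3) : R :=
  D * (a 0 0 * b 0 0 - a 1 0 * b 1 0) + a 2%:R 0 * b 2%:R 0.

Section Settings.
Variable D : R.
Local Notation u := (Num.sqrt (3 : R))^-1.
Local Notation w := (Num.sqrt (2 : R))^-1.
Local Notation q := (Num.sqrt (1 + 2 * D ^+ 2)).

Definition bob_setting (k : 'I_3) : 'cV[R]_3 :=
  if (k : nat) == 0%N then vec3 (2 * w * u) 0 u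
  else if (k : nat) == 1%N then vec3 (- (w * u)) w u
  else vec3 (- (w * u)) (- w) u.

Definition alice_setting (k : 'I_3) : 'cV[R]_3 :=
  if (k : nat) == 0%N then vec3 (2 * D * w / q) 0 q^-1 else vec3 0 0 1.

Let uu : u * u = 3^-1.
Proof. by rewrite -invfM -expr2 sqr_sqrtr. Qed.
Let ww : w * w = 2^-1.
Proof. by rewrite -invfM -expr2 sqr_sqrtr. Qed.
Let qq : q * q = 1 + 2 * D ^+ 2.
Proof. by rewrite -expr2 sqr_sqrtr // addr_ge0 // mulr_ge0 // sqr_ge0. Qed.
Let q_neq0 : q != 0.
Proof. by rewrite sqrtr_eq0 -ltNge; nra. Qed.

Lemma bob_setting_orthonormal k l :
  dot3 (bob_setting k) (bob_setting l) = (if k == l then 1 else 0).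
Proof.
have := uu; have := ww.
by case: k => [[|[|[|//]]] ?]; case: l => [[|[|[|//]]] ?];
  rewrite /bob_setting /= dot3_vec3; nra.
Qed.

Lemma alice_setting_unit k : dot3 (alice_setting k) (alice_setting k) = 1.
Proof.
case: k => [[|[|[|//]]] ?]; rewrite /alice_setting /= dot3_vec3 ?mul0r ?mul1r ?add0r //.
(* Abstracting the square roots keeps [field] from normalizing them into a
   form that [ww] and [qq] no longer match. *)
move: ww qq q_neq0; move: w q => w' q' ww' qq' q'_neq0.
transitivity ((4 * D ^+ 2 * (w' * w') + 1) / (q' * q')); first by field.
by rewrite ww' qq'; field; rewrite -qq' mulf_neq0.
Qed.

Lemma correlation_settings_sum :
  \sum_(k < 3) correlation D (alice_setting k) (bob_setting k) = (2 + q) * u.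
Proof.
rewrite !big_ord_recr big_ord0 /= /correlation /alice_setting /bob_setting /=.
rewrite !(vec3E0, vec3E1, vec3E2).
move: ww qq q_neq0; move: u w q => u' w' q' ww' qq' q'_neq0.
transitivity (u' * ((4 * D ^+ 2 * (w' * w') + 1) / q' + 2)); first by field.
have -> : 4 * D ^+ 2 * (w' * w') + 1 = q' * q' by rewrite ww' qq'; field.
by field.
Qed.

End Settings.

End Correlation.

Lemma steering_bound_lt (R : rcfType) (c : R) : 0 < c ->
  1 / Num.sqrt 3 < (2 + Num.sqrt (1 + 2 * c ^+ 2)) / (3 * Num.sqrt 3).
Proof.
move=> c_gt0; have s3_gt0 : 0 < Num.sqrt 3 :> R by rewrite sqrtr_gt0.
have q_gt1 : 1 < Num.sqrt (1 + 2 * c ^+ 2).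
  by rewrite -[X in X < _]sqrtr1 ltr_sqrt; have := exprn_gt0 2 c_gt0; lra.
have -> : (2 + Num.sqrt (1 + 2 * c ^+ 2)) / (3 * Num.sqrt 3)
          = (2 + Num.sqrt (1 + 2 * c ^+ 2)) / 3 * (1 / Num.sqrt 3).
  by field; rewrite gt_eqF.
by rewrite -[X in X < _]mul1r ltr_pM2r ?divr_gt0 //; lra.
Qed.

Section TwoQubit.
Variable R : rcfType.
Local Notation rc := (real_complex R).

Lemma mulii : 'i%C * 'i%C = -1 :> R[i].
Proof. by rewrite -expr2 sqr_i. Qed.

Lemma dot_sigmaE (a : 'cV[R]_3) (p q : 'I_2) : dot_sigma a p q =
  if (p : nat) == 0%N then
    (if (q : nat) == 0%N then rc (a 2%:R 0) else rc (a 0 0) - 'i%C * rc (a 1 0))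
  else (if (q : nat) == 0%N then rc (a 0 0) + 'i%C * rc (a 1 0) else - rc (a 2%:R 0)).
Proof.
have a_val k l : val k = val l -> a k 0 = a l 0 by move=> /val_inj ->.
rewrite /dot_sigma summxE !big_ord_recr big_ord0 /= !mxE /pauli /=.
rewrite (a_val (widen_ord _ (widen_ord _ ord_max)) 0 erefl)
  (a_val (widen_ord _ ord_max) 1 erefl) (a_val ord_max 2%:R erefl).
by case: p => [[|[|//]] ?]; case: q => [[|[|//]] ?] /=; ring.
Qed.

Definition bell_ket (c s : R) : 'cV[R[i]]_(2 * 2) :=
  rc c *: ket00 R + rc s *: ket11 R.

Lemma bell_ketE c s (k : 'I_(2 * 2)) :
  bell_ket c s k 0 = rc (if (k : nat) == 0%N then c else if (k : nat) == 3%N then s else 0).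
Proof.
rewrite /bell_ket /ket00 /ket11 !mxE.
by case: k => [[|[|[|[|//]]]] ?] /=; rewrite ?mxE /=; ring.
Qed.

Lemma conj_rc (x : R) : (rc x)^* = rc x.
Proof. exact: conjc_real. Qed.

(* [Defs.proj] is qualified: [proj] is also a name in mathcomp-analysis. *)
Lemma proj_realE n (psi : 'cV[R[i]]_n) (f : 'I_n -> R) :
  (forall k, psi k 0 = rc (f k)) -> forall p q, Defs.proj psi p q = rc (f p * f q).
Proof.
by move=> psiE p q; rewrite /Defs.proj !mxE big_ord1 !mxE !psiE conj_rc rmorphM.
Qed.

Lemma tr_bell_dot_sigma c s (a b : 'cV[R]_3) :
  \tr (Defs.proj (bell_ket c s) *m tensmx (dot_sigma a) (dot_sigma b)) =
  rc ((c ^+ 2 + s ^+ 2) * (a 2%:R 0 * b 2%:R 0)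
      + 2 * c * s * (a 0 0 * b 0 0 - a 1 0 * b 1 0)).
Proof.
rewrite /mxtrace.
under eq_bigr => p _ do rewrite mxE.
under eq_bigr => p _ do under eq_bigr => q _ do
  rewrite (proj_realE (bell_ketE c s)) mxE !dot_sigmaE.
rewrite !big_ord_recr !big_ord0 /=.
transitivity (rc ((c ^+ 2 + s ^+ 2) * (a 2%:R 0 * b 2%:R 0))
  + rc (2 * c * s) * (rc (a 0 0) * rc (b 0 0) + 'i%C * 'i%C * rc (a 1 0) * rc (b 1 0))).
  ring.
by rewrite mulii; ring.
Qed.

End TwoQubit.

Section ThetaState.
Variable R : realType.
Local Notation rc := (real_complex R).

Lemma psi1_bell (theta : R) : psi1 theta = bell_ket (cos theta) (sin theta).
Proof. by []. Qed.

Lemma psi2_bell (theta : R) : psi2 theta = bell_ket (sin theta) (- cos theta).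
Proof. by rewrite /psi2 /bell_ket rmorphN scaleNr. Qed.

Lemma tr_rho_s_dot_sigma (nu1 nu2 theta : R) (a b : 'cV[R]_3) : nu1 + nu2 = 1 ->
  \tr (rho_s nu1 nu2 theta *m tensmx (dot_sigma a) (dot_sigma b)) =
  rc (correlation ((nu1 - nu2) * sin (2 * theta)) a b).
Proof.
move=> nu_sum.
rewrite /rho_s mulmxDl -!scalemxAl mxtraceD !mxtraceZ psi1_bell psi2_bell.
rewrite /correlation mulr_natl sin_mulr2n.
move: (cos theta) (sin theta) (cos2Dsin2 theta) => c s cs.
(* Rewriting with [tr_bell_dot_sigma] would compare the two traces by
   conversion, unfolding real arithmetic; [congr2] matches them syntactically. *)
apply: etrans (congr2 (fun x y => rc nu1 * x + rc nu2 * y)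
  (tr_bell_dot_sigma c s a b) (tr_bell_dot_sigma s (- c) a b)) _.
rewrite -!rmorphM -rmorphD sqrrN [s ^+ 2 + _]addrC cs.
have -> : nu2 = 1 - nu1 by rewrite -nu_sum addrC addKr.
by congr rc; ring.
Qed.

Lemma steering_value_rho_s (nu1 nu2 theta : R) (a b : 'I_3 -> 'cV[R]_3) :
  nu1 + nu2 = 1 ->
  steering_value (rho_s nu1 nu2 theta) a b =
  rc (3^-1 * \sum_(k < 3) correlation ((nu1 - nu2) * sin (2 * theta)) (a k) (b k)).
Proof.
move=> nu_sum; rewrite /steering_value.
under eq_bigr => k _ do rewrite tr_rho_s_dot_sigma //.
by rewrite -rmorph_sum rmorphM fmorphV rmorph_nat.
Qed.

End ThetaState.

Theorem mainTheorem9 (R : realType) (theta nu1 nu2 : R) :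
  0 <= theta -> theta <= pi / 2 ->
  0 <= nu1 <= 1 -> 0 <= nu2 <= 1 -> nu1 + nu2 = 1 ->
  exists (a b : 'I_3 -> 'cV[R]_3),
    (forall k, dot3 (a k) (a k) = 1) /\
    (forall k l, dot3 (b k) (b l) = (if k == l then 1 else 0)) /\
    steering_value (rho_s nu1 nu2 theta) a b
      = real_complex R
          ((2 + Num.sqrt (1 + 2 * concurrence nu1 nu2 theta ^+ 2))
           / (3 * Num.sqrt 3)) /\
    (0 < concurrence nu1 nu2 theta ->
       1 / Num.sqrt 3 <
       (2 + Num.sqrt (1 + 2 * concurrence nu1 nu2 theta ^+ 2)) / (3 * Num.sqrt 3)).
Proof.
move=> _ _ _ _ nu_sum; set D := (nu1 - nu2) * sin (2 * theta).
have C2 : concurrence nu1 nu2 theta ^+ 2 = D ^+ 2 by rewrite /concurrence real_normK ?num_real.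
exists (alice_setting D), (@bob_setting R); split; first exact: alice_setting_unit.
split; first exact: bob_setting_orthonormal.
split; last exact: steering_bound_lt.
rewrite steering_value_rho_s // correlation_settings_sum C2.
by rewrite invfM mulrCA mulrA.
Qed.
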